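(* Let $\mathcal{F}=\{z\in\Omega:|z|=|z|_i\ge1\}$. For $z\in\mathcal{F}\cap k_{\infty^2}$, one has $\overline{\lambda}(z)=v_n$ if and only if $n=\log_q|z|$.
   Context: $q$ odd prime power, $A=\mathbb{F}_q[T]$, $k_\infty=\mathbb{F}_q((T^{-1}))$, $|T|=q$, $k_{\infty^2}=\mathbb{F}_{q^2}((T^{-1}))$, $\Omega=\mathbb{C}_\infty\smallsetminus k_\infty$, $|z|_i=\min_{w\in k_\infty}|z-w|$, $\Gamma=\mathrm{PGL}_2(A)$. Fix $\boldsymbol{\mathrm i}\in\mathbb{F}_{q^2}$ with $\boldsymbol{\mathrm i}^2\in\mathbb{F}_q^\times\smallsetminus(\mathbb{F}_q^\times)^2$; every $z\in k_{\infty^2}\smallsetminus k_\infty$ is $g\cdot\boldsymbol{\mathrm i}$ for some $g\in\mathrm{GL}_2(k_\infty)$ acting by Möbius transformations. Let $\mathcal{T}$ be the Bruhat–Tits tree of $\mathrm{PGL}_2(k_\infty)$ (vertices: homothety classes of $\mathcal{O}_\infty$-lattices in $k_\infty^2$). The vertex set of $\Gamma\backslash\mathcal{T}$ is $\{v_0,v_1,\dots\}$, $v_n$ the $\Gamma$-orbit of the class of $T^n\mathcal{O}_\infty\oplus\mathcal{O}_\infty$. For such $z=g\cdot\boldsymbol{\mathrm i}$, $\overline{\lambda}(z)$ is the $\Gamma$-orbit of the vertex $g\cdot[\mathcal{O}_\infty\oplus\mathcal{O}_\infty]$ (well defined since the stabilizer of $\boldsymbol{\mathrm i}$ lies in $\mathrm{PGL}_2(\mathcal{O}_\infty)$).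 *)

(* Concrete model of k_{oo^2} = F_{q^2}((1/T)) as Laurent
   series in 1/T with coefficients in a finite field L of order q^2;
   k_oo = F_q((1/T)) is the sub-ring of series with coefficients in
   F_q = {x in L | x^q = x}. *)
From HB Require Import structures.
From mathcomp Require Import all_boot all_order all_algebra.
From mathcomp Require Import zify.
From Stdlib Require Import ClassicalEpsilon.
Set Implicit Arguments. Unset Strict Implicit. Unset Printing Implicit Defensive.
Import Order.TTheory GRing.Theory Num.Theory.
Local Open Scope ring_scope.

Section Laurent.
Variable L : finFieldType.

(* f k is the coefficient of T^k; finitely many nonzero coefficients of
   positive T-degree large: there is N with f k = 0 for k > N. *)
Definition ls_fin (f : int -> L) : Prop :=
  exists N : int, forall k : int, N < k -> f k = 0.
Definition LS := {f : int -> L | ls_fin f}.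
Definition coef (x : LS) : int -> L := proj1_sig x.

Definition lsbound (x : LS) : int :=
  proj1_sig (constructive_indefinite_description _ (proj2_sig x)).
Lemma lsboundP (x : LS) k : lsbound x < k -> coef x k = 0.
Proof.
rewrite /lsbound; case: constructive_indefinite_description => N HN /=.
exact: HN.
Qed.

Definition ls_eq (x y : LS) : Prop := forall k, coef x k = coef y k.

Lemma add_fin (x y : LS) : ls_fin (fun k => coef x k + coef y k).
Proof.
exists (Num.max (lsbound x) (lsbound y)) => k; rewrite gt_max => /andP[h1 h2].
by rewrite !lsboundP ?addr0.
Qed.
Definition lsadd (x y : LS) : LS := exist _ _ (add_fin x y).

Lemma opp_fin (x : LS) : ls_fin (fun k => - coef x k).
Proof. by exists (lsbound x) => k hk; rewrite lsboundP ?oppr0. Qed.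
Definition lsopp (x : LS) : LS := exist _ _ (opp_fin x).
Definition lssub (x y : LS) : LS := lsadd x (lsopp y).

(* Cauchy product: (xy)_k = sum_i x_i y_(k-i), i ranging over the finite set
   k - bound y <= i <= bound x outside of which the terms vanish. *)
Definition lsmul_coef (x y : LS) (k : int) : L :=
  \sum_(j < absz (lsbound x + lsbound y - k + 1))
     coef x (k - lsbound y + j%:Z) * coef y (lsbound y - j%:Z).
Lemma mul_fin (x y : LS) : ls_fin (lsmul_coef x y).
Proof.
exists (lsbound x + lsbound y) => k hk; rewrite /lsmul_coef big1 // => j _.
rewrite lsboundP ?mul0r //; lia.
Qed.
Definition lsmul (x y : LS) : LS := exist _ _ (mul_fin x y).

Lemma const_fin (a : L) : ls_fin (fun k => if k == 0 then a else 0).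
Proof. by exists 0 => k hk; case: eqP => // e; move: hk; rewrite e ltxx. Qed.
Definition lsconst (a : L) : LS := exist _ _ (const_fin a).
Lemma Tpow_fin (n : int) : ls_fin (fun k => if k == n then 1 else 0).
Proof. by exists n => k hk; case: eqP => // e; move: hk; rewrite e ltxx. Qed.
Definition lsTpow (n : int) : LS := exist _ _ (Tpow_fin n).
Definition ls0 : LS := lsconst 0.
Definition ls1 : LS := lsconst 1.

Definition ls_top (x : LS) (d : int) : Prop :=
  coef x d <> 0 /\ forall k, d < k -> coef x k = 0.
Definition ls_deg (x : LS) : option int :=
  match excluded_middle_informative (exists d, ls_top x d) with
  | left h => Some (proj1_sig (constructive_indefinite_description _ h))
  | right _ => None
  end.
End Laurent.

Section Drinfeld.
Variables (q : nat) (L : finFieldType).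

Definition inFq (a : L) : Prop := a ^+ q = a.
Definition kinf (x : LS L) : Prop := forall k, inFq (coef x k).
Definition Oinf (x : LS L) : Prop := kinf x /\ forall k, 0 < k -> coef x k = 0.
Definition inA (x : LS L) : Prop := kinf x /\ forall k, k < 0 -> coef x k = 0.
Definition unitA (u : LS L) : Prop := exists w, inA w /\ ls_eq (lsmul u w) (ls1 L).

Definition ls_abs (x : LS L) : rat :=
  if ls_deg x is Some d then (q%:Q) ^ d else 0.

Definition is_imag_abs (z : LS L) (r : rat) : Prop :=
  (exists w, kinf w /\ ls_abs (lssub z w) = r) /\
  (forall w, kinf w -> r <= ls_abs (lssub z w)).

Definition inGL2kinf (a b c d : LS L) : Prop :=
  [/\ kinf a, kinf b, kinf c & kinf d] /\
  ~ ls_eq (lssub (lsmul a d) (lsmul b c)) (ls0 L).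

(* g . i = z,  i.e.  z = (a i + b) / (c i + d) *)
Definition mobius_eq (iota : L) (a b c d z : LS L) : Prop :=
  ls_eq (lsmul z (lsadd (lsmul c (lsconst iota)) d))
        (lsadd (lsmul a (lsconst iota)) b).

Definition veq (v w : LS L * LS L) : Prop := ls_eq v.1 w.1 /\ ls_eq v.2 w.2.
Definition matact (a b c d : LS L) (v : LS L * LS L) : LS L * LS L :=
  (lsadd (lsmul a v.1) (lsmul b v.2), lsadd (lsmul c v.1) (lsmul d v.2)).

Definition in_gL0 (a b c d : LS L) (v : LS L * LS L) : Prop :=
  exists x y, [/\ Oinf x, Oinf y & veq v (matact a b c d (x, y))].
Definition in_sLn (s : LS L) (n : nat) (v : LS L * LS L) : Prop :=
  exists x y, [/\ Oinf x, Oinf y &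
     veq v (lsmul s (lsmul (lsTpow L n%:Z) x), lsmul s y)].

(* the Gamma-orbit of the homothety class of g.[O+O] is v_n :
   some gamma in GL_2(A) maps g.(O+O) onto a homothetic of T^n O + O. *)
Definition lambda_is_vn (a b c d : LS L) (n : nat) : Prop :=
  exists al be ga de s : LS L,
    [/\ [/\ inA al, inA be, inA ga & inA de],
        unitA (lssub (lsmul al de) (lsmul be ga)),
        kinf s, ~ ls_eq s (ls0 L) &
        forall v, (exists w, in_gL0 a b c d w /\ veq v (matact al be ga de w))
                  <-> in_sLn s n v].
End Drinfeld.

(* Write z = x + y iota with x, y in k_oo. Since |z|_i is attained at w = x, the
   condition |z| = |z|_i says deg y = deg z =: D, and D >= 0 as |z| >= 1. Comparing
   the iota-parts of z (c iota + d) = a iota + b gives a = x c + y d and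
   b = x d + iota^2 y c, hence det g = y (d^2 - iota^2 c^2). As iota^2 is not a square
   in F_q, the norm form d^2 - iota^2 c^2 has degree exactly 2m, m = max (deg c, deg d).
   The entries of g have degrees at most D + m, D + m, m, m and det g has degree
   D + 2m, so g (O + O) = T^m (T^D O + O) exactly: lambda(z) = v_D.
   Finally, gamma (T^D O + O) = s (T^n O + O) with gamma in GL_2(A) forces D = n:
   the determinant bounds the covolumes, and the preimages of the basis of the
   right-hand side bound the degrees of the entries of gamma, which are >= 0. *)
From HB Require Import structures.
From mathcomp Require Import all_boot all_order all_algebra all_field.
From mathcomp Require Import zify ring.
From mathcomp Require boolp.
From Stdlib Require Import Classical ClassicalEpsilon ProofIrrelevance FunctionalExtensionality.
Set Implicit Arguments.
Unset Strict Implicit.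
Unset Printing Implicit Defensive.
Import Order.TTheory GRing.Theory Num.Theory.
Local Open Scope ring_scope.

Section PolyUpto.
Variable R : nzRingType.
Implicit Types p r : {poly R}.

Definition eq_upto n p r := forall i, (i <= n)%N -> p`_i = r`_i.

Lemma coefM_eq_upto n p p' r r' :
  eq_upto n p p' -> eq_upto n r r' -> (p * r)`_n = (p' * r')`_n.
Proof.
move=> hp hr; rewrite !coefM; apply: eq_bigr => i _; have hi := ltn_ord i.
by rewrite hp ?hr //; lia.
Qed.

Lemma eq_uptoM n p p' r r' : eq_upto n p p' -> eq_upto n r r' -> eq_upto n (p * r) (p' * r').
Proof.
move=> hp hr i hi; apply: coefM_eq_upto => j hj.
  by apply: hp; apply: leq_trans hi.
by apply: hr; apply: leq_trans hi.
Qed.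

Lemma coef_expr_lt r m i : r`_0 = 0 -> (i < m)%N -> (r ^+ m)`_i = 0.
Proof.
move=> r0; elim: m i => [//|m IH] [|i] hi; rewrite exprS coefM.
  by rewrite big_ord1 r0 mul0r.
rewrite big_ord_recl r0 mul0r add0r big1 // => j _.
by rewrite IH ?mulr0 // lift0; lia.
Qed.

End PolyUpto.

Section TruncatedInverse.
Variable F : fieldType.
Implicit Types p A B : {poly F}.

Lemma eq_upto_inv_uniq n p A B : eq_upto n (p * A) 1 -> eq_upto n (p * B) 1 -> eq_upto n A B.
Proof.
move=> hA hB i hi.
rewrite -[A]mulr1 -(eq_uptoM (fun _ _ => erefl) hB hi) mulrA [A * p]mulrC.
by rewrite (eq_uptoM hA (fun _ _ => erefl) hi) mul1r.
Qed.

Definition polinv p n : {poly F} :=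
  (p`_0)^-1%:P * \sum_(j < n.+1) (1 - (p`_0)^-1%:P * p) ^+ j.

Lemma polinvP p n : p`_0 != 0 -> eq_upto n (p * polinv p n) 1.
Proof.
move=> p0; set c := p`_0; set r := 1 - c^-1%:P * p.
have r0 : r`_0 = 0 by rewrite /r coefB coef1 coefCM mulVf // subrr.
have -> : p * polinv p n = 1 - r ^+ n.+1.
  rewrite /polinv -/c -/r mulrA.
  have -> : p * c^-1%:P = 1 - r by rewrite /r opprB addrC subrK mulrC.
  by rewrite -(opprB (r ^+ n.+1) 1) (subrX1 r n.+1) -mulNr (opprB r 1).
by move=> i hi; rewrite coefB coef_expr_lt ?subr0.
Qed.

End TruncatedInverse.

Section LaurentRing.
Variable L : finFieldType.
Implicit Types x y z : LS L.

Lemma ls_ext x y : ls_eq x y -> x = y.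
Proof.
case: x => f hf; case: y => g hg; rewrite /ls_eq /= => e.
have efg : f = g by apply: functional_extensionality.
by subst g; congr exist; apply: proof_irrelevance.
Qed.

Lemma ls_eqP x y : ls_eq x y <-> x = y.
Proof. by split=> [|-> k //]; apply: ls_ext. Qed.

Definition ls_degle x (N : int) := forall k, N < k -> coef x k = 0.

Lemma ls_degle_lsbound x : ls_degle x (lsbound x).
Proof. by move=> k; apply: lsboundP. Qed.

Lemma ls_degle_trans x N M : ls_degle x N -> N <= M -> ls_degle x M.
Proof. by move=> hN hNM k hk; apply: hN; apply: le_lt_trans hk. Qed.

Lemma ls_degle_min x N M : ls_degle x N -> ls_degle x M -> ls_degle x (Num.min N M).
Proof. by move=> hN hM; case: leP. Qed.

Lemma ls_coef_cases (P : int -> Prop) (N : int) :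
  (forall k, N < k -> P k) -> (forall n : nat, P (N - n%:Z)) -> forall k, P k.
Proof.
move=> hgt hle k; have [/hgt //|hk] := ltP N k.
by have -> : k = N - (absz (N - k)%R)%:Z by lia.
Qed.

Section ConvWindow.
Variables (f g : int -> L) (Bf Bg k : int).
Hypotheses (hf : forall i, Bf < i -> f i = 0) (hg : forall i, Bg < i -> g i = 0).

(* [lsmul_coef] sums over one particular window; any window covering the support
   gives the same value. *)
Definition conv_window (lo : int) (len : nat) :=
  \sum_(j < len) f (k - (lo + j%:Z)) * g (lo + j%:Z).

Definition window_covers lo len := lo <= k - Bf /\ Bg < lo + len%:Z.

Lemma conv_window_extl lo len t : lo <= k - Bf ->
  conv_window lo len = conv_window (lo - t%:Z) (t + len).
Proof.
move=> hlo; elim: t => [|t IH]; first by rewrite subr0.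
rewrite IH addSn /conv_window big_ord_recl hf ?mul0r ?add0r /=; last by lia.
by apply: eq_bigr => j _; congr (f _ * g _); rewrite /bump /=; lia.
Qed.

Lemma conv_window_extr lo len r : Bg < lo + len%:Z ->
  conv_window lo len = conv_window lo (len + r).
Proof.
move=> hhi; elim: r => [|r IH]; first by rewrite addn0.
by rewrite IH addnS /conv_window big_ord_recr /= hg ?mulr0 ?addr0 //; lia.
Qed.

Lemma conv_window_eq lo1 len1 lo2 len2 :
  window_covers lo1 len1 -> window_covers lo2 len2 -> conv_window lo1 len1 = conv_window lo2 len2.
Proof.
wlog le12 : lo1 len1 lo2 len2 / lo1 <= lo2.
  move=> hw h1 h2; have [hle|/ltW hle] := leP lo1 lo2; first exact: hw.
  by rewrite (hw lo2 len2 lo1 len1).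
move=> [hl1 hh1] [hl2 hh2]; set t := absz (lo2 - lo1)%R.
rewrite (conv_window_extl len2 t hl2).
have -> : lo2 - t%:Z = lo1 by lia.
have [hle|hlt] := leqP (t + len2) len1.
  by rewrite [RHS](@conv_window_extr lo1 (t + len2) (len1 - (t + len2))) ?subnKC //; lia.
by rewrite (conv_window_extr (t + len2 - len1) hh1) subnKC // ltnW.
Qed.
End ConvWindow.

Lemma coef_lsmul_window x y Bx By k lo len : ls_degle x Bx -> ls_degle y By ->
  window_covers Bx By k lo len -> coef (lsmul x y) k = conv_window (coef x) (coef y) k lo len.
Proof.
move=> hx hy [hlo hhi]; rewrite [LHS]/= /lsmul_coef (reindex_inj rev_ord_inj) /=.
set M := absz _.
have hM : lsbound x + lsbound y - k + 1 <= M%:Z by rewrite /M; lia.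
transitivity (conv_window (coef x) (coef y) k (lsbound y - M%:Z + 1) M).
  apply: eq_bigr => j _; have hj := ltn_ord j.
  by congr (coef x _ * coef y _); lia.
apply: (conv_window_eq (ls_degle_min hx (@ls_degle_lsbound x))
                       (ls_degle_min hy (@ls_degle_lsbound y))); split; lia.
Qed.

Lemma ls_degleM x y Nx Ny : ls_degle x Nx -> ls_degle y Ny -> ls_degle (lsmul x y) (Nx + Ny).
Proof.
move=> hx hy k hk; rewrite (coef_lsmul_window (lo := k - Nx) (len := 0) hx hy); last by split; lia.
by rewrite /conv_window big_ord0.
Qed.

(* Products are computed on heads, polynomials in [T^-1]: this reduces the ring laws
   and inversion of Laurent series to computations in [{poly L}]. *)
Definition ls_head x (N : int) (n : nat) : {poly L} := \poly_(i < n.+1) coef x (N - i%:Z).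

Lemma coef_ls_head x N n i : (i <= n)%N -> (ls_head x N n)`_i = coef x (N - i%:Z).
Proof. by move=> hi; rewrite coef_poly ltnS hi. Qed.

Lemma coef_lsmul_head x y Nx Ny n : ls_degle x Nx -> ls_degle y Ny ->
  coef (lsmul x y) (Nx + Ny - n%:Z) = (ls_head x Nx n * ls_head y Ny n)`_n.
Proof.
move=> hx hy; rewrite (coef_lsmul_window (lo := Ny - n%:Z) (len := n.+1) hx hy); last by split; lia.
rewrite coefM /conv_window; apply: eq_bigr => i _; have hi := ltn_ord i.
by rewrite !coef_ls_head; [congr (coef x _ * coef y _)|..]; lia.
Qed.

Lemma ls_head_lsmul x y Nx Ny n i : ls_degle x Nx -> ls_degle y Ny -> (i <= n)%N ->
  (ls_head (lsmul x y) (Nx + Ny) n)`_i = (ls_head x Nx n * ls_head y Ny n)`_i.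
Proof.
move=> hx hy hi; rewrite coef_ls_head // coef_lsmul_head //.
by apply: coefM_eq_upto => j hj; rewrite !coef_ls_head //; lia.
Qed.

Lemma lsmulC : commutative (@lsmul L).
Proof.
move=> x y; apply: ls_ext.
have hx := @ls_degle_lsbound x; have hy := @ls_degle_lsbound y.
apply: (ls_coef_cases (N := lsbound x + lsbound y)) => [k hk|n].
  by rewrite (ls_degleM hx hy) // (ls_degleM hy hx) // addrC.
by rewrite (coef_lsmul_head n hx hy) [lsbound x + _]addrC (coef_lsmul_head n hy hx) mulrC.
Qed.

Lemma lsmulA : associative (@lsmul L).
Proof.
move=> x y z; apply: ls_ext.
have hx := @ls_degle_lsbound x; have hy := @ls_degle_lsbound y.
have hz := @ls_degle_lsbound z.
apply: (ls_coef_cases (N := lsbound x + lsbound y + lsbound z)) => [k hk|n].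
  by rewrite (ls_degleM hx (ls_degleM hy hz)) ?addrA // (ls_degleM (ls_degleM hx hy) hz).
rewrite (coef_lsmul_head n (ls_degleM hx hy) hz) -[lsbound x + _ + _]addrA.
rewrite (coef_lsmul_head n hx (ls_degleM hy hz)).
transitivity ((ls_head x (lsbound x) n * (ls_head y (lsbound y) n * ls_head z (lsbound z) n))`_n).
  by apply: coefM_eq_upto => // i hi; rewrite ls_head_lsmul.
by rewrite mulrA; apply: coefM_eq_upto => // i hi; rewrite ls_head_lsmul.
Qed.

Lemma lsmul1l : left_id (ls1 L) (@lsmul L).
Proof.
move=> x; apply: ls_ext; have hx := @ls_degle_lsbound x.
have h1 : ls_degle (ls1 L) 0 by move=> k /= /lt0r_neq0/negbTE ->.
apply: (ls_coef_cases (N := lsbound x)) => [k hk|n].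
  by rewrite (ls_degleM h1 hx) ?hx // add0r.
rewrite -{1}[lsbound x]add0r (coef_lsmul_head n h1 hx) coefM big_ord_recl big1 => [|i _].
  by rewrite !coef_ls_head ?subn0 //= mul1r addr0.
by rewrite coef_ls_head /= ?mul0r //; lia.
Qed.

Lemma coef_lsadd x y k : coef (lsadd x y) k = coef x k + coef y k.
Proof. by []. Qed.

Lemma lsmulDl : left_distributive (@lsmul L) (@lsadd L).
Proof.
move=> x y z; apply: ls_ext; set N := Num.max (lsbound x) (lsbound y).
have hx : ls_degle x N by apply: ls_degle_trans (@ls_degle_lsbound x) _; rewrite le_max lexx.
have hy : ls_degle y N.
  by apply: ls_degle_trans (@ls_degle_lsbound y) _; rewrite le_max lexx orbT.
have hxy : ls_degle (lsadd x y) N by move=> k hk; rewrite coef_lsadd hx ?hy ?addr0.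
have hz := @ls_degle_lsbound z.
apply: (ls_coef_cases (N := N + lsbound z)) => [k hk|n]; rewrite coef_lsadd.
  by rewrite (ls_degleM hxy hz) ?(ls_degleM hx hz) ?(ls_degleM hy hz) ?addr0.
rewrite (coef_lsmul_head n hxy hz) (coef_lsmul_head n hx hz) (coef_lsmul_head n hy hz).
rewrite -coefD -mulrDl.
by apply: coefM_eq_upto => // i hi; rewrite coefD !coef_ls_head.
Qed.

Lemma lsaddA : associative (@lsadd L).
Proof. by move=> x y z; apply: ls_ext => k; rewrite /= addrA. Qed.

Lemma lsaddC : commutative (@lsadd L).
Proof. by move=> x y; apply: ls_ext => k; rewrite /= addrC. Qed.

Lemma lsadd0l : left_id (ls0 L) (@lsadd L).
Proof. by move=> x; apply: ls_ext => k /=; case: eqP; rewrite add0r. Qed.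

Lemma lsaddNl : left_inverse (ls0 L) (@lsopp L) (@lsadd L).
Proof. by move=> x; apply: ls_ext => k /=; rewrite addNr; case: eqP. Qed.

End LaurentRing.

HB.instance Definition _ (L : finFieldType) := boolp.gen_eqMixin (LS L).
HB.instance Definition _ (L : finFieldType) := boolp.gen_choiceMixin (LS L).

Lemma ls1_neq0 (L : finFieldType) : ls1 L != ls0 L.
Proof. by apply/eqP => /(congr1 (fun v => coef v 0)) /=; apply/eqP; rewrite oner_eq0. Qed.

HB.instance Definition _ (L : finFieldType) :=
  GRing.isZmodule.Build (LS L) (@lsaddA L) (@lsaddC L) (@lsadd0l L) (@lsaddNl L).
HB.instance Definition _ (L : finFieldType) :=
  GRing.Zmodule_isComNzRing.Build (LS L)
    (@lsmulA L) (@lsmulC L) (@lsmul1l L) (@lsmulDl L) (@ls1_neq0 L).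

Section LaurentDegree.
Variable L : finFieldType.
Implicit Types x y z : LS L.

Lemma lsaddE x y : lsadd x y = x + y. Proof. by []. Qed.
Lemma lsmulE x y : lsmul x y = x * y. Proof. by []. Qed.
Lemma lsoppE x : lsopp x = - x. Proof. by []. Qed.
Lemma lssubE x y : lssub x y = x - y. Proof. by []. Qed.
Lemma ls0E : ls0 L = 0. Proof. by []. Qed.
Lemma ls1E : ls1 L = 1. Proof. by []. Qed.
Definition lsE := (lsaddE, lsmulE, lssubE, lsoppE, ls0E, ls1E).

Lemma coef_lsD x y k : coef (x + y) k = coef x k + coef y k. Proof. by []. Qed.
Lemma coef_lsN x k : coef (- x) k = - coef x k. Proof. by []. Qed.
Lemma coef_lsB x y k : coef (x - y) k = coef x k - coef y k. Proof. by []. Qed.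
Lemma coef_ls0 k : coef (0 : LS L) k = 0. Proof. by rewrite /=; case: eqP. Qed.
Lemma coef_lsC (a : L) k : coef (lsconst a) k = if k == 0 then a else 0. Proof. by []. Qed.
Lemma coef_lsT (a : int) k : coef (lsTpow L a) k = if k == a then 1 else 0. Proof. by []. Qed.

Lemma ls_degleD x y N : ls_degle x N -> ls_degle y N -> ls_degle (x + y) N.
Proof. by move=> hx hy k hk; rewrite coef_lsD hx ?hy ?addr0. Qed.

Lemma ls_degleN x N : ls_degle x N -> ls_degle (- x) N.
Proof. by move=> hx k hk; rewrite coef_lsN hx ?oppr0. Qed.

Lemma ls_degleB x y N : ls_degle x N -> ls_degle y N -> ls_degle (x - y) N.
Proof. by move=> hx hy; apply: ls_degleD (ls_degleN hy). Qed.

Lemma ls_degle0 N : ls_degle (0 : LS L) N.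
Proof. by move=> k _; rewrite coef_ls0. Qed.

Lemma ls_degleC (a : L) : ls_degle (lsconst a) 0.
Proof. by move=> k /= /lt0r_neq0/negbTE ->. Qed.

Lemma ls_degleT (a : int) : ls_degle (lsTpow L a) a.
Proof. by move=> k /= /gt_eqF ->. Qed.

Lemma coef_lsM_top x y Nx Ny : ls_degle x Nx -> ls_degle y Ny ->
  coef (x * y) (Nx + Ny) = coef x Nx * coef y Ny.
Proof.
move=> hx hy; rewrite -[Nx + Ny]subr0 (coef_lsmul_head 0 hx hy) coefM big_ord1.
by rewrite !coef_ls_head // !subr0.
Qed.

Lemma coef_lsCM (a : L) x k : coef (lsconst a * x) k = a * coef x k.
Proof.
have hx := @ls_degle_lsbound L x; move: k.
apply: (ls_coef_cases (N := lsbound x)) => [k hk|n].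
  by rewrite (ls_degleM (ls_degleC a) hx) ?hx ?mulr0 // add0r.
rewrite -{1}[lsbound x]add0r (coef_lsmul_head n (ls_degleC a) hx) coefM big_ord_recl big1.
  by rewrite !coef_ls_head ?subn0 // subr0 /= addr0.
by move=> i _; rewrite coef_ls_head /= ?mul0r //; lia.
Qed.

Lemma coef_lsTM (a : int) x k : coef (lsTpow L a * x) k = coef x (k - a).
Proof.
have hx := @ls_degle_lsbound L x; move: k.
apply: (ls_coef_cases (N := a + lsbound x)) => [k hk|n].
  by rewrite (ls_degleM (ls_degleT (a := a)) hx) ?hx //; lia.
rewrite (coef_lsmul_head n (ls_degleT (a := a)) hx) coefM big_ord_recl big1.
  by rewrite !coef_ls_head ?subn0 // subr0 /= eqxx mul1r addr0; congr coef; lia.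
move=> i _; have hi := ltn_ord i; rewrite coef_ls_head /= /bump /= ?add1n; last by lia.
by case: eqP => [|_]; [lia | rewrite mul0r].
Qed.

Lemma lsTpowD (a b : int) : lsTpow L a * lsTpow L b = lsTpow L (a + b).
Proof.
apply: ls_ext => k; rewrite coef_lsTM !coef_lsT.
by do 2 case: eqP => ? //; lia.
Qed.

Lemma lsTpow0 : lsTpow L 0 = 1.
Proof. by apply: ls_ext => k; rewrite coef_lsT. Qed.

Lemma lsTpowK (a : int) x : lsTpow L a * (lsTpow L (- a) * x) = x.
Proof. by rewrite mulrA lsTpowD subrr lsTpow0 mul1r. Qed.

Lemma lsconstM (a b : L) : lsconst a * lsconst b = lsconst (a * b).
Proof. by apply: ls_ext => k; rewrite coef_lsCM !coef_lsC; case: eqP; rewrite ?mulr0. Qed.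

Lemma ls_top_uniq x d e : ls_top x d -> ls_top x e -> d = e.
Proof.
move=> [hd bd] [he be]; case: (ltgtP d e) => // lt.
  by case: he; apply: bd.
by case: hd; apply: be.
Qed.

Lemma ls_top_le x d N : ls_top x d -> ls_degle x N -> d <= N.
Proof. by move=> [hd _] hN; rewrite leNgt; apply/negP => /hN. Qed.

Lemma ls_top_neq0 x d : ls_top x d -> x <> 0.
Proof. by move=> [hd _] x0; apply: hd; rewrite x0 coef_ls0. Qed.

Lemma ls_top_exists x : x <> 0 -> exists d, ls_top x d.
Proof.
move=> nz; set N := lsbound x.
have ex : exists n : nat, coef x (N - n%:Z) != 0.
  apply: NNPP => hall; apply: nz; apply: ls_ext => k; rewrite coef_ls0.
  move: k; apply: (ls_coef_cases (N := N)) => [k|n]; first exact: lsboundP.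
  by apply/eqP/negPn/negP => hn; apply: hall; exists n.
exists (N - (ex_minn ex)%:Z).
case: ex_minnP => m hm hmin; split; first exact/eqP.
move=> k hk; case: (ltP N k) => hNk; first exact: lsboundP.
have -> : k = N - (absz (N - k)%R)%:Z by lia.
by apply/eqP; apply: contraTT hk => /hmin; lia.
Qed.

Lemma ls_top_pair x y : x <> 0 \/ y <> 0 ->
  exists m, [/\ ls_degle x m, ls_degle y m & (coef x m != 0) || (coef y m != 0)].
Proof.
have top_or0 z : z = 0 \/ exists d, ls_top z d.
  by case: (classic (z = 0)) => [|/ls_top_exists]; [left | right].
move=> xy; case: (top_or0 x) (top_or0 y) => [x0|[dx [x_dx hx]]] [y0|[dy [y_dy hy]]].
- by case: xy.
- by exists dy; rewrite x0 (introF eqP y_dy) orbT; split=> //; apply: ls_degle0.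
- by exists dx; rewrite y0 (introF eqP x_dx); split=> //; apply: ls_degle0.
have [le_xy|/ltW le_yx] := leP dx dy.
  by exists dy; rewrite (introF eqP y_dy) orbT; split=> //; apply: ls_degle_trans hx le_xy.
by exists dx; rewrite (introF eqP x_dx); split=> //; apply: ls_degle_trans hy le_yx.
Qed.

Lemma ls_topM x y d e : ls_top x d -> ls_top y e -> ls_top (x * y) (d + e).
Proof.
move=> [hd bd] [he be]; split; last exact: ls_degleM.
by rewrite coef_lsM_top //; apply/eqP; rewrite mulf_neq0 //; apply/eqP.
Qed.

Lemma ls_topT (a : int) : ls_top (lsTpow L a) a.
Proof. by split; [rewrite coef_lsT eqxx; apply/eqP; apply: oner_neq0 | apply: ls_degleT]. Qed.

Lemma ls_topC (a : L) : a != 0 -> ls_top (lsconst a) 0.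
Proof. by move=> a0; split; [rewrite coef_lsC eqxx; apply/eqP | apply: ls_degleC]. Qed.

Lemma ls_abs_top (q : nat) x d : ls_top x d -> ls_abs q x = (q%:Q) ^ d.
Proof.
move=> hd; rewrite /ls_abs /ls_deg; case: excluded_middle_informative => [e|[]].
  by case: constructive_indefinite_description => d' hd' /=; rewrite (ls_top_uniq hd' hd).
by exists d.
Qed.

Lemma ls_abs0 (q : nat) : ls_abs q (0 : LS L) = 0.
Proof.
rewrite /ls_abs /ls_deg; case: excluded_middle_informative => // ex.
by exfalso; case: ex => d [[]]; rewrite coef_ls0.
Qed.

Definition ls_poly x := forall k, k < 0 -> coef x k = 0.

Lemma ls_polyM x y : ls_poly x -> ls_poly y -> ls_poly (x * y).
Proof.
move=> hx hy k hk; have bx := @ls_degle_lsbound L x; have by' := @ls_degle_lsbound L y.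
set len := (absz (lsbound y - k + lsbound x)%R).+1.
rewrite (coef_lsmul_window (lo := k - lsbound x) (len := len) bx by'); last by split; lia.
rewrite /conv_window big1 // => j _.
have [hlt|hge] := ltP (k - lsbound x + j%:Z) 0; first by rewrite hy ?mulr0.
by rewrite hx ?mul0r //; lia.
Qed.

Lemma ls_polyB x y : ls_poly x -> ls_poly y -> ls_poly (x - y).
Proof. by move=> hx hy k hk; rewrite coef_lsB hx ?hy ?subr0. Qed.

Lemma ls_poly_const (a : L) : ls_poly (lsconst a).
Proof. by move=> k /= /ltr0_neq0/negbTE ->. Qed.

Lemma ls_poly_top_ge0 x d : ls_poly x -> ls_top x d -> 0 <= d.
Proof. by move=> hx [hd _]; rewrite leNgt; apply/negP => /hx. Qed.

Lemma ls_poly_unit_top x y : ls_poly x -> ls_poly y -> x * y = 1 -> ls_top x 0.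
Proof.
move=> hx hy hxy.
have x0 : x <> 0 by move=> x0; move: hxy; rewrite x0 mul0r => /eqP; rewrite eq_sym oner_eq0.
have y0 : y <> 0 by move=> y0; move: hxy; rewrite y0 mulr0 => /eqP; rewrite eq_sym oner_eq0.
have [[d hd] [e he]] := (ls_top_exists x0, ls_top_exists y0).
have de0 : d + e = 0.
  by apply: (ls_top_uniq (ls_topM hd he)); rewrite hxy; apply: (ls_topC (oner_neq0 L)).
have d0 := ls_poly_top_ge0 hx hd; have e0 := ls_poly_top_ge0 hy he.
by have -> : 0 = d by lia.
Qed.

End LaurentDegree.

Arguments ls_degleT {L} a.
Arguments ls_degleC {L} a.
Arguments ls_topT {L} a.

Section LaurentInverse.
Variable L : finFieldType.
Implicit Types x y : LS L.

Lemma ls_head_eq_upto x N m n : (m <= n)%N -> eq_upto m (ls_head x N m) (ls_head x N n).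
Proof. by move=> mn i im; rewrite !coef_ls_head //; apply: leq_trans mn. Qed.

Lemma inv_fin x t : ls_fin (fun k => if k <= - t then
  (polinv (ls_head x t (absz (- t - k)%R)) (absz (- t - k)%R))`_(absz (- t - k)%R) else 0).
Proof. by exists (- t) => k hk; case: leP => //; lia. Qed.

Definition lsinv x t : LS L := exist _ _ (inv_fin x t).

Lemma ls_degle_lsinv x t : ls_degle (lsinv x t) (- t).
Proof. by move=> k hk /=; case: leP => //; lia. Qed.

Lemma ls_head_lsinv x t n : coef x t != 0 ->
  eq_upto n (ls_head (lsinv x t) (- t) n) (polinv (ls_head x t n) n).
Proof.
move=> xt i hi; rewrite coef_ls_head //=.
have -> : (- t - i%:Z <= - t) = true by lia.
have -> : absz (- t - (- t - i%:Z))%R = i by lia.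
have head0 m : (ls_head x t m)`_0 != 0 by rewrite coef_ls_head // subr0.
apply: (eq_upto_inv_uniq (polinvP (n := i) (head0 i))) (leqnn i) => j hj.
rewrite (eq_uptoM (ls_head_eq_upto x t hi) (fun _ _ => erefl) hj).
exact: (polinvP (n := n) (head0 n) (leq_trans hj hi)).
Qed.

Lemma ls_inv_exists x t : ls_top x t -> exists y, x * y = 1 /\ ls_degle y (- t).
Proof.
move=> [xt hxt]; exists (lsinv x t); split; last exact: ls_degle_lsinv.
have hy := @ls_degle_lsinv x t.
apply: ls_ext; apply: (ls_coef_cases (N := t + - t)) => [k hk|n].
  by rewrite (ls_degleM hxt hy) //= gt_eqF //; lia.
have xt' : coef x t != 0 by apply/eqP.
have head0 : (ls_head x t n)`_0 != 0 by rewrite coef_ls_head // subr0.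
rewrite (coef_lsmul_head n hxt hy) (coefM_eq_upto (fun _ _ => erefl) (ls_head_lsinv (n := n) xt')).
by rewrite (polinvP head0) // coef1 /= subrr sub0r oppr_eq0; case: n head0.
Qed.

End LaurentInverse.

Section LaurentMap.
Variables (L : finFieldType) (f : L -> L).
Hypothesis f0 : f 0 = 0.
Implicit Types x y : LS L.

Lemma map_fin x : ls_fin (fun k => f (coef x k)).
Proof. by exists (lsbound x) => k hk; rewrite lsboundP. Qed.

Definition ls_map x : LS L := exist _ _ (map_fin x).

Lemma ls_degle_map x N : ls_degle x N -> ls_degle (ls_map x) N.
Proof. by move=> hx k hk /=; rewrite hx. Qed.

Hypotheses (fD : {morph f : a b / a + b}) (fM : {morph f : a b / a * b}).

Lemma ls_mapM x y : ls_map (x * y) = ls_map x * ls_map y.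
Proof.
apply: ls_ext => k; have hx := @ls_degle_lsbound L x; have hy := @ls_degle_lsbound L y.
set lo := k - lsbound x; set len := (absz (lsbound y - lo)%R).+1.
have adm : window_covers (lsbound x) (lsbound y) k lo len by split; rewrite /len; lia.
have -> : coef (ls_map (x * y)) k = f (coef (x * y) k) by [].
rewrite (coef_lsmul_window hx hy adm).
rewrite (coef_lsmul_window (ls_degle_map hx) (ls_degle_map hy) adm).
by rewrite /conv_window (big_morph f fD f0); apply: eq_bigr => j _; rewrite fM.
Qed.

End LaurentMap.

Section Frobenius.
Variables (q : nat) (L : finFieldType).
Hypothesis hL : #|L| = (q ^ 2)%N.
Implicit Types (a b : L) (x y : LS L).

Lemma pchar_nat_q : [pchar L].-nat q.
Proof.
have [p pp pc] := finPcharP L.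
have := pprimeChar_pgroup pc; rewrite /pgroup.pgroup cardsT /= hL pnatX /= orbF.
by rewrite (eq_pnat _ (pcharf_eq pc)).
Qed.

Lemma q_gt1 : (1 < q)%N.
Proof. by have := finNzRing_gt1 L; rewrite hL; case: q => [|[]]. Qed.

Lemma exprqD a b : (a + b) ^+ q = a ^+ q + b ^+ q.
Proof. exact: exprDn_pchar pchar_nat_q. Qed.

Lemma exprqN a : (- a) ^+ q = - a ^+ q.
Proof. exact: exprNn_pchar pchar_nat_q. Qed.

Lemma exprq0 : (0 : L) ^+ q = 0.
Proof. by rewrite expr0n eqn0Ngt ltnW // q_gt1. Qed.

Lemma exprqK a : (a ^+ q) ^+ q = a.
Proof. by rewrite -exprM mulnn -hL expf_card. Qed.

Lemma inFq0 : inFq q (0 : L). Proof. exact: exprq0. Qed.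
Lemma inFq1 : inFq q (1 : L). Proof. exact: expr1n. Qed.

Lemma inFqD a b : inFq q a -> inFq q b -> inFq q (a + b).
Proof. by rewrite /inFq exprqD => -> ->. Qed.

Lemma inFqN a : inFq q a -> inFq q (- a).
Proof. by rewrite /inFq exprqN => ->. Qed.

Lemma inFqM a b : inFq q a -> inFq q b -> inFq q (a * b).
Proof. by rewrite /inFq exprMn => -> ->. Qed.

Lemma inFqV a : inFq q a -> inFq q a^-1.
Proof. by rewrite /inFq exprVn => ->. Qed.

Definition ls_frob := ls_map (f := fun a : L => a ^+ q) exprq0.

Lemma kinf_frob x : kinf q x <-> ls_frob x = x.
Proof.
split=> [hx|hx k]; first by apply: ls_ext => k; apply: hx.
by rewrite /inFq -[in RHS]hx.
Qed.

Lemma ls_frobM x y : ls_frob (x * y) = ls_frob x * ls_frob y.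
Proof. by apply: ls_mapM => a b; [apply: exprqD | apply: exprMn]. Qed.

Lemma kinfM x y : kinf q x -> kinf q y -> kinf q (x * y).
Proof. by move=> /kinf_frob hx /kinf_frob hy; apply/kinf_frob; rewrite ls_frobM hx hy. Qed.

Lemma kinfD x y : kinf q x -> kinf q y -> kinf q (x + y).
Proof. by move=> hx hy k; apply: inFqD. Qed.

Lemma kinfN x : kinf q x -> kinf q (- x).
Proof. by move=> hx k; apply: inFqN. Qed.

Lemma kinfB x y : kinf q x -> kinf q y -> kinf q (x - y).
Proof. by move=> hx hy; apply: kinfD (kinfN hy). Qed.

Lemma kinf_const a : inFq q a -> kinf q (lsconst a).
Proof. by move=> ha k; rewrite coef_lsC; case: eqP => // _; apply: inFq0. Qed.

Lemma kinf_Tpow (n : int) : kinf q (lsTpow L n).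
Proof. by move=> k; rewrite coef_lsT; case: eqP => _; [apply: inFq1 | apply: inFq0]. Qed.

Lemma kinf0 : kinf q (0 : LS L). Proof. exact: kinf_const inFq0. Qed.
Lemma kinf1 : kinf q (1 : LS L). Proof. exact: kinf_const inFq1. Qed.

(* Frobenius is multiplicative, so [ls_frob y] is another inverse of [x = ls_frob x]. *)
Lemma kinf_inv x y : kinf q x -> x * y = 1 -> kinf q y.
Proof.
move=> hx xy; have /kinf_frob fx := hx; apply/kinf_frob.
have fxy : x * ls_frob y = 1.
  by rewrite -{1}fx -ls_frobM xy; apply/kinf_frob/kinf1.
by rewrite -[ls_frob y]mul1r -xy mulrC mulrA [ls_frob y * x]mulrC fxy mul1r.
Qed.

End Frobenius.

Section ImaginaryUnit.
Variables (q : nat) (L : finFieldType) (iota : L).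
Hypotheses (hL : #|L| = (q ^ 2)%N) (hiq : inFq q (iota ^+ 2))
  (hisq : ~ (exists s : L, inFq q s /\ s ^+ 2 = iota ^+ 2)).
Implicit Types (a u v : L) (x y z : LS L).

Lemma iota_neq0 : iota != 0.
Proof. by apply/eqP => i0; apply: hisq; exists 0; rewrite i0; split; first exact: inFq0. Qed.

Lemma iota_notin_Fq : ~ inFq q iota.
Proof. by move=> hi; apply: hisq; exists iota. Qed.

Lemma exprq_iota : iota ^+ q = - iota.
Proof.
have : (iota ^+ q - iota) * (iota ^+ q + iota) == 0.
  by rewrite -subr_sqr exprAC hiq subrr.
rewrite mulf_eq0 subr_eq0 addr_eq0 => /orP[/eqP hi|/eqP //].
by case: iota_notin_Fq.
Qed.

Lemma two_neq0 : (2 : L) != 0.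
Proof.
apply/eqP => two0; apply: iota_notin_Fq; rewrite /inFq exprq_iota.
by apply/eqP; rewrite eq_sym -subr_eq0 opprK -mulr2n -mulr_natr two0 mulr0.
Qed.

Definition re_part a := (a + a ^+ q) / 2.
Definition im_part a := (a - a ^+ q) / (2 * iota).

Lemma re_part0 : re_part 0 = 0.
Proof. by rewrite /re_part (exprq0 hL) addr0 mul0r. Qed.

Lemma im_part0 : im_part 0 = 0.
Proof. by rewrite /im_part (exprq0 hL) subr0 mul0r. Qed.

Lemma two_exprq : (2 : L) ^+ q = 2.
Proof. by rewrite (exprqD hL) expr1n. Qed.

Lemma re_part_Fq a : inFq q (re_part a).
Proof. by rewrite /inFq /re_part exprMn exprVn two_exprq (exprqD hL) (exprqK hL) addrC. Qed.

Lemma im_part_Fq a : inFq q (im_part a).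
Proof.
rewrite /inFq /im_part exprMn exprVn exprMn two_exprq exprq_iota.
by rewrite (exprqD hL) (exprqN hL) (exprqK hL) mulrN invrN mulrN -mulNr opprB.
Qed.

Lemma re_im_partE a : re_part a + im_part a * iota = a.
Proof. by rewrite /re_part /im_part; field; rewrite iota_neq0 two_neq0. Qed.

Lemma Fq_iota_indep u v : inFq q u -> inFq q v -> u + v * iota = 0 -> u = 0 /\ v = 0.
Proof.
move=> hu hv e; suff v0 : v = 0 by split=> //; move: e; rewrite v0 mul0r addr0.
apply/eqP; apply: contraT => v0; case: iota_notin_Fq.
have viota : v * iota = - u by apply/eqP; rewrite -addr_eq0 addrC e.
have -> : iota = - u / v by rewrite -viota mulrC mulKf.
by apply: inFqM; [apply: (inFqN hL) | apply: inFqV].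
Qed.

Lemma norm_form_neq0 u v : inFq q u -> inFq q v -> (u != 0) || (v != 0) ->
  v * v - iota ^+ 2 * (u * u) != 0.
Proof.
move=> hu hv; have [->|u0 _] := eqVneq u 0.
  by move=> /= v0; rewrite mul0r mulr0 subr0 mulf_neq0.
rewrite subr_eq0; apply/eqP => e; apply: hisq; exists (v / u); split.
  by apply: inFqM => //; apply: inFqV.
by rewrite expr_div_n !expr2 e mulfK // mulf_neq0 //; apply/eqP.
Qed.

Definition ls_re := ls_map re_part0.
Definition ls_im := ls_map im_part0.

Lemma kinf_re z : kinf q (ls_re z). Proof. by move=> k; apply: re_part_Fq. Qed.
Lemma kinf_im z : kinf q (ls_im z). Proof. by move=> k; apply: im_part_Fq. Qed.

Lemma ls_re_imE z : z = ls_re z + ls_im z * lsconst iota.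
Proof. by apply: ls_ext => k; rewrite coef_lsD mulrC coef_lsCM /= mulrC re_im_partE. Qed.

Lemma kinf_iota_indep x y : kinf q x -> kinf q y -> x + y * lsconst iota = 0 ->
  x = 0 /\ y = 0.
Proof.
move=> hx hy e.
have hk k : coef x k = 0 /\ coef y k = 0.
  apply: Fq_iota_indep => //; move: (congr1 (fun w => coef w k) e).
  by rewrite coef_lsD mulrC coef_lsCM coef_ls0 mulrC.
by split; apply: ls_ext => k; rewrite coef_ls0; case: (hk k).
Qed.

End ImaginaryUnit.

Section Lattices.
Variables (q : nat) (L : finFieldType).
Hypothesis hL : #|L| = (q ^ 2)%N.
Implicit Types (x y s : LS L) (v w : LS L * LS L).

Lemma veqE v w : veq v w <-> v = w.
Proof. by case: v w => [v1 v2] [w1 w2]; rewrite /veq !ls_eqP /=; split=> [[-> ->] | [-> ->]]. Qed.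

Lemma matactE al be ga de v :
  matact al be ga de v = (al * v.1 + be * v.2, ga * v.1 + de * v.2).
Proof. by []. Qed.

Lemma Oinf0 : Oinf q (0 : LS L). Proof. by split; [apply: kinf0 | apply: ls_degle0]. Qed.
Lemma Oinf1 : Oinf q (1 : LS L). Proof. by split; [apply: kinf1 | apply: ls_degleC]. Qed.

Lemma in_sLnP s n v : in_sLn q s n v <->
  exists x y, [/\ Oinf q x, Oinf q y & v = (s * (lsTpow L n%:Z * x), s * y)].
Proof.
by split=> -[x [y [hx hy hv]]]; exists x, y; split=> //; apply/veqE.
Qed.

Lemma in_sLn_degle s S n v : ls_degle s S -> in_sLn q s n v ->
  ls_degle v.1 (S + n%:Z) /\ ls_degle v.2 S.
Proof.
move=> hs /in_sLnP[x [y [[_ hx] [_ hy] ->]]] /=; split.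
  by apply: ls_degle_trans (ls_degleM hs (ls_degleM (ls_degleT n%:Z) hx)) _; lia.
by apply: ls_degle_trans (ls_degleM hs hy) _; lia.
Qed.

Section GLattice.
Variables (a b c d : LS L) (D : nat) (m : int).
Hypotheses (ka : kinf q a) (kb : kinf q b) (kc : kinf q c) (kd : kinf q d).
Hypotheses (ha : ls_degle a (D%:Z + m)) (hb : ls_degle b (D%:Z + m))
  (hc : ls_degle c m) (hd : ls_degle d m).
Hypothesis hdet : ls_top (a * d - b * c) (D%:Z + (m + m)).

Lemma gL0_sub_sLn v : in_gL0 q a b c d v -> in_sLn q (lsTpow L m) D v.
Proof.
case=> x [y [[kx hx] [ky hy] /veqE ->]]; apply/in_sLnP.
exists (lsTpow L (- (m + D%:Z)) * (a * x + b * y)), (lsTpow L (- m) * (c * x + d * y)).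
split.
- split; first exact: (kinfM hL (kinf_Tpow hL _) (kinfD hL (kinfM hL ka kx) (kinfM hL kb ky))).
  have hv1 := ls_degleD (ls_degleM ha hx) (ls_degleM hb hy).
  by apply: ls_degle_trans (ls_degleM (ls_degleT _) hv1) _; lia.
- split; first exact: (kinfM hL (kinf_Tpow hL _) (kinfD hL (kinfM hL kc kx) (kinfM hL kd ky))).
  have hv2 := ls_degleD (ls_degleM hc hx) (ls_degleM hd hy).
  by apply: ls_degle_trans (ls_degleM (ls_degleT _) hv2) _; lia.
- by rewrite matactE /= mulrA lsTpowD !lsTpowK.
Qed.

Lemma sLn_sub_gL0 v : in_sLn q (lsTpow L m) D v -> in_gL0 q a b c d v.
Proof.
move=> hv; have [hv1 hv2] := in_sLn_degle (ls_degleT m) hv.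
have /in_sLnP[x' [y' [[kx' _] [ky' _] ev]]] := hv.
have kv1 : kinf q v.1.
  by rewrite ev; exact: (kinfM hL (kinf_Tpow hL _) (kinfM hL (kinf_Tpow hL _) kx')).
have kv2 : kinf q v.2 by rewrite ev; exact: (kinfM hL (kinf_Tpow hL _) ky').
have [e [de1 he]] := ls_inv_exists hdet.
have ke : kinf q e by apply: (kinf_inv hL (kinfB hL (kinfM hL ka kd) (kinfM hL kb kc)) de1).
exists (e * (d * v.1 - b * v.2)), (e * (a * v.2 - c * v.1)); split.
- split; first exact: (kinfM hL ke (kinfB hL (kinfM hL kd kv1) (kinfM hL kb kv2))).
  apply: ls_degle_trans (ls_degleM he (ls_degleB (N := D%:Z + (m + m)) _ _)) _.
  + by apply: ls_degle_trans (ls_degleM hd hv1) _; lia.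
  + by apply: ls_degle_trans (ls_degleM hb hv2) _; lia.
  + lia.
- split; first exact: (kinfM hL ke (kinfB hL (kinfM hL ka kv2) (kinfM hL kc kv1))).
  apply: ls_degle_trans (ls_degleM he (ls_degleB (N := D%:Z + (m + m)) _ _)) _.
  + by apply: ls_degle_trans (ls_degleM ha hv2) _; lia.
  + by apply: ls_degle_trans (ls_degleM hc hv1) _; lia.
  + lia.
- apply/veqE; rewrite matactE /=; case: v {hv hv1 hv2 kv1 kv2 ev} => v1 v2 /=.
  by congr pair; rewrite -[LHS]mul1r -de1; ring.
Qed.

Lemma gL0_sLnE v : in_gL0 q a b c d v <-> in_sLn q (lsTpow L m) D v.
Proof. by split; [apply: gL0_sub_sLn | apply: sLn_sub_gL0]. Qed.

End GLattice.

Lemma matact_det al be ga de w1 w2 :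
  let v1 := matact al be ga de w1 in let v2 := matact al be ga de w2 in
  v1.1 * v2.2 - v2.1 * v1.2 = (al * de - be * ga) * (w1.1 * w2.2 - w2.1 * w1.2).
Proof. by rewrite /= !lsE; ring. Qed.

Lemma matact_adj al be ga de w :
  let v := matact al be ga de w in
  (al * de - be * ga) * w.1 = de * v.1 - be * v.2 /\
  (al * de - be * ga) * w.2 = al * v.2 - ga * v.1.
Proof. by rewrite /= !lsE; split; ring. Qed.

Section VertexIndex.
Variables (s0 s al be ga de : LS L) (D n : nat) (S0 S : int).
Hypotheses (hs0 : ls_top s0 S0) (hs : ls_top s S).
Hypotheses (pal : ls_poly al) (pga : ls_poly ga) (pde : ls_poly de).
Hypothesis heps : ls_top (al * de - be * ga) 0.
Hypothesis hlat : forall v,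
  (exists w, in_sLn q s0 D w /\ veq v (matact al be ga de w)) <-> in_sLn q s n v.

Lemma vertex_covolume_le : S0 + S0 + D%:Z <= S + S + n%:Z.
Proof.
have image w : in_sLn q s0 D w -> in_sLn q s n (matact al be ga de w).
  by move=> hw; apply/hlat; exists w; split=> //; apply/veqE.
set w1 := (s0 * (lsTpow L D * 1), s0 * 0); set w2 := (s0 * (lsTpow L D * 0), s0 * 1).
have /image hv1 : in_sLn q s0 D w1.
  by apply/in_sLnP; exists 1, 0; split=> //; [apply: Oinf1 | apply: Oinf0].
have /image hv2 : in_sLn q s0 D w2.
  by apply/in_sLnP; exists 0, 1; split=> //; [apply: Oinf0 | apply: Oinf1].
have [b11 b12] := in_sLn_degle hs.2 hv1; have [b21 b22] := in_sLn_degle hs.2 hv2.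
have top := ls_topM heps (ls_topM (ls_topM hs0 (ls_topT D%:Z)) hs0).
have det : (al * de - be * ga) * (s0 * lsTpow L D * s0) =
    (matact al be ga de w1).1 * (matact al be ga de w2).2 -
    (matact al be ga de w2).1 * (matact al be ga de w1).2.
  by rewrite matact_det /=; congr (_ * _); ring.
rewrite det in top; have := ls_top_le top (ls_degleB (ls_degleM b11 b22) (ls_degleM b21 b12)).
lia.
Qed.

Lemma vertex_preimage_degle v : in_sLn q s n v ->
  ls_degle (de * v.1 - be * v.2) (S0 + D%:Z) /\ ls_degle (al * v.2 - ga * v.1) S0.
Proof.
move=> /hlat[w [hw /veqE ->]]; have [<- <-] := matact_adj al be ga de w.
have [b1 b2] := in_sLn_degle hs0.2 hw.
by split; [move: (ls_degleM heps.2 b1) | move: (ls_degleM heps.2 b2)]; rewrite add0r.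
Qed.

Lemma sLn_basis1 : in_sLn q s n (s * lsTpow L n, 0).
Proof.
by apply/in_sLnP; exists 1, 0; rewrite mulr1 mulr0; split; [apply: Oinf1 | apply: Oinf0|].
Qed.

Lemma sLn_basis2 : in_sLn q s n (0, s).
Proof.
by apply/in_sLnP; exists 0, 1; rewrite !mulr0 mulr1; split; [apply: Oinf0 | apply: Oinf1|].
Qed.

Lemma vertex_top_de_le td : ls_top de td -> td + (S + n%:Z) <= S0 + D%:Z.
Proof.
move=> htd; have [+ _] := vertex_preimage_degle sLn_basis1; rewrite /= mulr0 subr0.
exact: ls_top_le (ls_topM htd (ls_topM hs (ls_topT n%:Z))).
Qed.

Lemma vertex_top_ga_le tg : ls_top ga tg -> tg + (S + n%:Z) <= S0.
Proof.
move=> htg; have [_ +] := vertex_preimage_degle sLn_basis1; rewrite /= mulr0 sub0r.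
move=> /ls_degleN; rewrite opprK.
exact: ls_top_le (ls_topM htg (ls_topM hs (ls_topT n%:Z))).
Qed.

Lemma vertex_top_al_le ta : ls_top al ta -> ta + S <= S0.
Proof.
move=> hta; have [_ +] := vertex_preimage_degle sLn_basis2; rewrite /= mulr0 subr0.
exact: ls_top_le (ls_topM hta hs).
Qed.

(* If [ga = 0] the diagonal entries of the matrix are constants and the bounds on
   [al], [de] together with the covolume bound give [D = n]; if [ga <> 0] the bound on
   [ga] is only compatible with the covolume bound when [D = n = 0]. *)
Lemma vertex_index_eq : D = n.
Proof.
have vol := vertex_covolume_le.
have [ga0|/eqP ga0] := eqVneq ga 0.
  have eps_de : al * de - be * ga = al * de by rewrite ga0 mulr0 subr0.
  have top := heps; rewrite eps_de in top; have nz := ls_top_neq0 top.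
  have al0 : al <> 0 by move=> al0; apply: nz; rewrite al0 mul0r.
  have de0 : de <> 0 by move=> de0; apply: nz; rewrite de0 mulr0.
  have [[ta hta] [td htd]] := (ls_top_exists al0, ls_top_exists de0).
  have := ls_top_uniq top (ls_topM hta htd).
  have := ls_poly_top_ge0 pal hta; have := ls_poly_top_ge0 pde htd.
  have := vertex_top_de_le htd; have := vertex_top_al_le hta; lia.
have [tg htg] := ls_top_exists ga0.
have := ls_poly_top_ge0 pga htg; have := vertex_top_ga_le htg; lia.
Qed.

End VertexIndex.

Lemma lambda_is_vn_iff (a b c d : LS L) (D n : nat) (m : int) :
  (forall v, in_gL0 q a b c d v <-> in_sLn q (lsTpow L m) D v) ->
  lambda_is_vn q a b c d n <-> n = D.
Proof.
move=> hg; split.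
  case=> al [be [ga [de [s [[[_ pal] [_ pbe] [_ pga] [_ pde]] unit_eps _ s0 hlat]]]]].
  have [w [[_ pw] /ls_eqP ew]] := unit_eps.
  have heps := ls_poly_unit_top (ls_polyB (ls_polyM pal pde) (ls_polyM pbe pga)) pw ew.
  have [S hs] : exists S, ls_top s S by apply: ls_top_exists => s_0; apply: s0; rewrite s_0.
  apply: esym; apply: (vertex_index_eq (ls_topT m) hs pal pga pde heps) => v.
  by rewrite -hlat; split=> -[x [hx ev]]; exists x; split=> //; apply/hg.
move=> ->; exists 1, 0, 0, 1, (lsTpow L m).
have A1 : inA q (1 : LS L) by split; [apply: kinf1 | apply: ls_poly_const].
have A0 : inA q (0 : LS L) by split; [apply: kinf0 | apply: ls_poly_const].
split=> //; first by exists 1; split=> //; apply/ls_eqP; rewrite !lsE; ring.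
- exact: kinf_Tpow.
- by move/ls_eqP/(ls_top_neq0 (ls_topT m)).
move=> v; rewrite -hg.
have act1 w : matact 1 0 0 1 w = w by case: w => w1 w2; rewrite matactE /=; congr pair; ring.
by split=> [[w [hw /veqE ->]]|hv]; [rewrite act1 | exists v; split=> //; apply/veqE; rewrite act1].
Qed.

End Lattices.

Section MobiusLattice.
Variables (q : nat) (L : finFieldType) (iota : L).
Hypotheses (hL : #|L| = (q ^ 2)%N) (hiq : inFq q (iota ^+ 2))
  (hisq : ~ (exists s : L, inFq q s /\ s ^+ 2 = iota ^+ 2)).
Implicit Types (a b c d x y z : LS L).

Let i2 := lsconst (iota ^+ 2).

Lemma qexprz_le (d e : int) : (q%:Q ^ d <= q%:Q ^ e) = (d <= e).
Proof. by rewrite ler_eXz2l // ltr1n (q_gt1 hL). Qed.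

Lemma ls_im_top z D : ls_top z D ->
  (forall w, kinf q w -> ls_abs q z <= ls_abs q (lssub z w)) -> ls_top (ls_im iota hL z) D.
Proof.
move=> hz min_z; set y := ls_im iota hL z.
have zy : lssub z (ls_re hL z) = y * lsconst iota.
  by rewrite lssubE {1}(ls_re_imE hL hiq hisq z) addrC addKr.
have := min_z _ (kinf_re hL z); rewrite zy (ls_abs_top _ hz).
have [y0|/ls_top_exists[d hy]] := classic (y = 0).
  by rewrite y0 mul0r ls_abs0 lt_geF // exprz_gt0 // ltr0n ltnW // (q_gt1 hL).
have top_yi := ls_topM hy (ls_topC (iota_neq0 hL hisq)).
rewrite (ls_abs_top _ top_yi) addr0 qexprz_le => Dd.
suff -> : D = d by [].
by apply/eqP; rewrite eq_le Dd (ls_top_le hy (ls_degle_map _ hz.2)).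
Qed.

Lemma mobius_entries a b c d x y : kinf q a -> kinf q b -> kinf q c -> kinf q d ->
  kinf q x -> kinf q y -> mobius_eq iota a b c d (x + y * lsconst iota) ->
  a = x * c + y * d /\ b = x * d + i2 * (y * c).
Proof.
move=> ka kb kc kd kx ky /ls_eqP; rewrite !lsE => hz.
set P := x * d + i2 * (y * c) - b; set Q := x * c + y * d - a.
have PQ : P + Q * lsconst iota = 0.
  have -> : P + Q * lsconst iota = (x + y * lsconst iota) * (c * lsconst iota + d)
      - (a * lsconst iota + b) + y * c * (i2 - lsconst iota * lsconst iota) by rewrite /P /Q; ring.
  by rewrite hz subrr lsconstM -expr2 subrr mulr0 addr0.
have kP : kinf q P.
  exact: (kinfB hL (kinfD hL (kinfM hL kx kd) (kinfM hL (kinf_const hL hiq) (kinfM hL ky kc))) kb).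
have kQ : kinf q Q by exact: (kinfB hL (kinfD hL (kinfM hL kx kc) (kinfM hL ky kd)) ka).
have [P0 Q0] := kinf_iota_indep hL hisq kP kQ PQ.
by split; apply/eqP; rewrite eq_sym -subr_eq0; apply/eqP; [rewrite -/Q | rewrite -/P].
Qed.

Lemma norm_form_top c d : kinf q c -> kinf q d -> c <> 0 \/ d <> 0 ->
  exists m, [/\ ls_degle c m, ls_degle d m & ls_top (d * d - i2 * (c * c)) (m + m)].
Proof.
move=> kc kd /ls_top_pair[m [hc hd cd]]; exists m; split=> //.
have h2 : ls_degle (i2 * (c * c)) (m + m).
  by rewrite -[m + m]add0r; apply: ls_degleM (ls_degleC _) (ls_degleM hc hc).
split; last exact: ls_degleB (ls_degleM hd hd) h2.
rewrite coef_lsB coef_lsM_top // coef_lsCM coef_lsM_top //.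
exact/eqP/(norm_form_neq0 hisq (kc m) (kd m) cd).
Qed.

Lemma mobius_lattice z a b c d :
  is_imag_abs q z (ls_abs q z) -> 1 <= ls_abs q z ->
  inGL2kinf q a b c d -> mobius_eq iota a b c d z ->
  exists (D : nat) (m : int), ls_abs q z = q%:Q ^+ D /\
    forall v, in_gL0 q a b c d v <-> in_sLn q (lsTpow L m) D v.
Proof.
move=> [_ min_z] z1 [[ka kb kc kd] /ls_eqP det0] hgz.
have z0 : z <> 0 by move=> z0; move: z1; rewrite z0 ls_abs0 ler10.
have [Dz hDz] := ls_top_exists z0.
have D0 : 0 <= Dz by rewrite -(qexprz_le 0) expr0z -(ls_abs_top _ hDz).
have [D DzE] : exists D : nat, Dz = D%:Z by exists (absz Dz); rewrite gez0_abs.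
rewrite {Dz D0}DzE in hDz.
have hy := ls_im_top hDz min_z.
have hx := ls_degle_map (re_part0 hL) hDz.2.
rewrite (ls_re_imE hL hiq hisq z) in hgz.
have [ha hb] := mobius_entries ka kb kc kd (kinf_re hL z) (kinf_im hL hiq hisq z) hgz.
have cd : c <> 0 \/ d <> 0.
  have [c0|] := classic (c = 0); last by left.
  by right=> d0; apply: det0; rewrite !lsE c0 d0 !mulr0 subrr.
have [m [hc hd hN]] := norm_form_top kc kd cd.
exists D, m; split; first by rewrite (ls_abs_top _ hDz).
apply: gL0_sLnE => //.
- by rewrite ha; apply: ls_degleD (ls_degleM hx hc) (ls_degleM hy.2 hd).
- rewrite hb; apply: ls_degleD (ls_degleM hx hd) _.
  by rewrite -[_ + m]add0r; apply: ls_degleM (ls_degleC _) (ls_degleM hy.2 hc).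
- have -> : a * d - b * c = ls_im iota hL z * (d * d - i2 * (c * c)) by rewrite ha hb; ring.
  exact: ls_topM hy hN.
Qed.

End MobiusLattice.

Theorem lemma4p2 (q : nat) (L : finFieldType)
  (hL : #|L| = (q ^ 2)%N) (hq : odd q)
  (iota : L) (hi0 : iota ^+ 2 != 0) (hiq : inFq q (iota ^+ 2))
  (hisq : ~ (exists s : L, inFq q s /\ s ^+ 2 = iota ^+ 2))
  (z : LS L)
  (hzOmega : ~ kinf q z)
  (hzF : is_imag_abs q z (ls_abs q z)) (hz1 : 1 <= ls_abs q z)
  (a b c d : LS L) (hg : inGL2kinf q a b c d) (hgz : mobius_eq iota a b c d z)
  (n : nat) :
  lambda_is_vn q a b c d n <-> ls_abs q z = (q%:Q) ^+ n.
Proof.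
have [D [m [-> hlat]]] := mobius_lattice hL hiq hisq hzF hz1 hg hgz.
rewrite (lambda_is_vn_iff hL n hlat); split=> [-> // | /ieexprIn qDn].
have q1 : 1 < q%:Q by rewrite ltr1n (q_gt1 hL).
by apply/esym/qDn; [apply: lt_trans q1 | rewrite gt_eqF].
Qed.
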